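(* Let $M_1,\dots,M_n$ be real skew-symmetric $m\times m$ matrices with $2\leq n\leq m$, and let $v_1,\dots,v_{m-n}$ be nonpositive real numbers such that $M_1^2-\sum_{l=2}^n M_l^2=\mathrm{Diag}\left(-\tfrac12\mathrm{tr}(M_1^2),\tfrac12\mathrm{tr}(M_2^2),\dots,\tfrac12\mathrm{tr}(M_n^2),v_1,\dots,v_{m-n}\right).$ Then $(v_1,\dots,v_{m-n})=(0,\dots,0)$, $\lambda_1\left(\sum_{l=2}^n M_l^2\right)=\sum_{l=2}^n\lambda_1(M_l^2)$, and $\mathrm{rank}(M_i)\leq2$ for every $i\in\{2,\dots,n\}$.
   Context: For a real symmetric (or complex Hermitian) $m\times m$ matrix $A$, its real eigenvalues counted with multiplicity are ordered $\lambda_1(A)\leq\lambda_2(A)\leq\dots\leq\lambda_m(A)$. *)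

From HB Require Import structures.
From mathcomp Require Import all_boot all_order all_algebra.
From mathcomp Require Import classical_sets reals.
Set Implicit Arguments. Unset Strict Implicit. Unset Printing Implicit Defensive.
Import Order.TTheory GRing.Theory Num.Theory.
Local Open Scope ring_scope.
Local Open Scope classical_set_scope.

(* lambda_1(A): the smallest (real) eigenvalue of a real square matrix A
   (used only for symmetric A, whose eigenvalues are all real; multiplicity
   is irrelevant for the smallest one). *)
Definition lambda1 (R : realType) (m : nat) (A : 'M[R]_m) : R :=
  inf [set a : R | eigenvalue A a].

Definition skew_symmetric (R : realType) (m : nat) (A : 'M[R]_m) : Prop := A^T = - A.

From HB Require Import structures.
From mathcomp Require Import all_boot all_order all_algebra.
From mathcomp Require Import classical_sets reals.
From mathcomp Require Import ring lra zify.
Import Order.TTheory GRing.Theory Num.Theory.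
Local Open Scope ring_scope.
Set Implicit Arguments. Unset Strict Implicit.

(* For a skew-symmetric M write d(M) for the squared norm of its first row and
   w(M) for the squared Frobenius norm of the minor obtained by deleting its
   first row and column, so that (M^2)_00 = -d(M) and tr(M^2) = -(2 d(M) + w(M)).
   Comparing the (0,0) entries and the traces of both sides of the hypothesis
   gives 2 d(M_1) + sum_l w(M_l) = (2/3) sum_k v_k, a nonnegative quantity equal
   to a nonpositive one. Hence every v_k vanishes and every M_l (l >= 2) is
   supported on its first row and column. Such an M_l has rank at most 2, e_0 is
   an eigenvector of M_l^2 for the eigenvalue -d(M_l), and by Cauchy-Schwarz
   u^T M_l^2 u = -|M_l u|^2 >= -d(M_l) |u|^2. So the smallest eigenvalues of all
   the M_l^2 and of their sum are attained at the common eigenvector e_0, which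
   makes lambda_1 additive on them. *)

Lemma CauchySchwarz_sum (R : realDomainType) (I : finType) (P : pred I)
    (a u : I -> R) :
  (\sum_(i | P i) a i * u i) ^+ 2
    <= (\sum_(i | P i) a i ^+ 2) * (\sum_(i | P i) u i ^+ 2).
Proof.
set S := \sum_(i | P i) \sum_(j | P j) (a i * u j - a j * u i) ^+ 2.
have S_ge0 : 0 <= S by do 2![apply: sumr_ge0 => ? _]; exact: sqr_ge0.
have lagrange : S = \sum_(i | P i) \sum_(j | P j) (a i ^+ 2 * u j ^+ 2)
    + \sum_(i | P i) \sum_(j | P j) (a j ^+ 2 * u i ^+ 2)
    - 2 * \sum_(i | P i) \sum_(j | P j) (a i * u i) * (a j * u j).
  rewrite mulr_sumr -big_split -sumrB /=.
  apply: eq_bigr => i _; rewrite mulr_sumr -big_split -sumrB /=.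
  by apply: eq_bigr => j _; ring.
rewrite [X in _ + X - _]exchange_big -!big_distrlr /= -expr2 in lagrange.
lra.
Qed.

Lemma mulmx_trmx_row (R : ringType) n (u : 'rV[R]_n) : (u *m u^T) 0 0 = \sum_j u 0 j ^+ 2.
Proof. by rewrite mxE; apply: eq_bigr => j _; rewrite mxE. Qed.

Section BorderedSkewMatrices.
Variables (R : realFieldType) (k : nat).
Implicit Types (M : 'M[R]_k.+1) (u : 'rV[R]_k.+1).

Definition row0_sqnorm M := \sum_j M 0 j ^+ 2.
Definition minor0_sqnorm M := \sum_(i | i != 0) \sum_(j | j != 0) M i j ^+ 2.
Definition is_border_mx M := forall i j, i != 0 -> j != 0 -> M i j = 0.

Lemma row0_sqnorm_ge0 M : 0 <= row0_sqnorm M.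
Proof. by apply: sumr_ge0 => j _; exact: sqr_ge0. Qed.

Lemma minor0_sqnorm_ge0 M : 0 <= minor0_sqnorm M.
Proof. by do 2![apply: sumr_ge0 => ? _]; exact: sqr_ge0. Qed.

Lemma minor0_sqnorm_eq0 M : minor0_sqnorm M = 0 -> is_border_mx M.
Proof.
move=> sum0 i j i0 j0.
have row_i0 := psumr_eq0P (fun i _ => sumr_ge0 _ (fun j _ => sqr_ge0 (M i j))) sum0 i0.
have /eqP := psumr_eq0P (fun j _ => sqr_ge0 (M i j)) row_i0 j0.
by rewrite sqrf_eq0 => /eqP.
Qed.

Variable M : 'M[R]_k.+1.
Hypothesis skewM : M^T = - M.

Lemma skew_mxE i j : M i j = - M j i.
Proof. by have := congr1 (fun A : 'M_k.+1 => A j i) skewM; rewrite !mxE. Qed.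

Lemma skew_mx_diag i : M i i = 0.
Proof. by apply/eqP; rewrite -eqNr -skew_mxE. Qed.

Lemma skew_sqr_diag i : (M ^+ 2) i i = - \sum_j M i j ^+ 2.
Proof.
rewrite expr2 -mulmxE mxE -sumrN; apply: eq_bigr => j _.
by rewrite [M j i]skew_mxE mulrN.
Qed.

Lemma row0_sqnorm_col : row0_sqnorm M = \sum_i M i 0 ^+ 2.
Proof. by apply: eq_bigr => j _; rewrite skew_mxE sqrrN. Qed.

Lemma skew_sqr_tr : \tr (M ^+ 2) = - (2 * row0_sqnorm M + minor0_sqnorm M).
Proof.
rewrite /mxtrace (eq_bigr _ (fun i _ => skew_sqr_diag i)) sumrN; congr (- _).
rewrite (bigD1 0) //= -/(row0_sqnorm M) mulr_natl mulr2n -addrA; congr (_ + _).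
rewrite (eq_bigr _ (fun i _ => bigD1 0 isT)) big_split /=; congr (_ + _).
by rewrite row0_sqnorm_col [RHS](bigD1 0) //= skew_mx_diag expr0n add0r.
Qed.

Lemma skew_sqr_qform u : (u *m M ^+ 2 *m u^T) 0 0 = - \sum_j (u *m M) 0 j ^+ 2.
Proof.
have MuT : M *m u^T = - (u *m M)^T by rewrite trmx_mul skewM mulNmx opprK.
by rewrite expr2 -mulmxE mulmxA -[_ *m M *m _]mulmxA MuT mulmxN mxE mulmx_trmx_row.
Qed.

Hypothesis borderM : is_border_mx M.

Lemma border_skew_row0_sqr :
  (delta_mx 0 0 : 'rV_k.+1) *m M ^+ 2 = - row0_sqnorm M *: delta_mx 0 0.
Proof.
apply/rowP => j; rewrite -rowE !mxE.
have [-> | j0] := eqVneq j 0.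
  rewrite mulr1 -sumrN; apply: eq_bigr => t _.
  by rewrite [M t 0]skew_mxE mulrN -expr2.
rewrite mulr0 (bigD1 0) //= skew_mx_diag mul0r add0r.
by rewrite big1 // => t t0; rewrite (borderM t0 j0) mulr0.
Qed.

Lemma border_skew_mul_sqnorm u :
  \sum_j (u *m M) 0 j ^+ 2 <= row0_sqnorm M * \sum_j u 0 j ^+ 2.
Proof.
have uM0 : (u *m M) 0 0 = \sum_(i | i != 0) M i 0 * u 0 i.
  rewrite mxE (bigD1 0) //= skew_mx_diag mulr0 add0r.
  by apply: eq_bigr => i _; rewrite mulrC.
have uMj j : j != 0 -> (u *m M) 0 j = u 0 0 * M 0 j.
  move=> j0; rewrite mxE (bigD1 0) //= big1 ?addr0 // => i i0.
  by rewrite borderM // mulr0.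
have row0_off0 : row0_sqnorm M = \sum_(j | j != 0) M 0 j ^+ 2.
  by rewrite /row0_sqnorm (bigD1 0) //= skew_mx_diag expr0n add0r.
have col0_off0 : row0_sqnorm M = \sum_(i | i != 0) M i 0 ^+ 2.
  by rewrite row0_sqnorm_col (bigD1 0) //= skew_mx_diag expr0n add0r.
have split_uM :
    \sum_j (u *m M) 0 j ^+ 2 = (u *m M) 0 0 ^+ 2 + u 0 0 ^+ 2 * row0_sqnorm M.
  rewrite (bigD1 0) //= row0_off0 mulr_sumr; congr (_ + _).
  by apply: eq_bigr => j j0; rewrite uMj // exprMn.
have split_u : \sum_j u 0 j ^+ 2 = u 0 0 ^+ 2 + \sum_(i | i != 0) u 0 i ^+ 2.
  by rewrite (bigD1 0).
have := CauchySchwarz_sum (fun i => i != 0) (fun i => M i 0) (fun i => u 0 i).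
rewrite -uM0 -col0_off0 split_uM split_u.
nra.
Qed.

Lemma border_skew_sqr_qform_ge u :
  - (row0_sqnorm M * \sum_j u 0 j ^+ 2) <= (u *m M ^+ 2 *m u^T) 0 0.
Proof. by rewrite skew_sqr_qform lerN2 border_skew_mul_sqnorm. Qed.

Lemma border_skew_rank : (\rank M <= 2)%N.
Proof.
pose e : 'rV[R]_k.+1 := delta_mx 0 0.
have -> : M = row_mx (col 0 M) e^T *m col_mx e (row 0 M).
  apply/matrixP => i j; rewrite mul_row_col !mxE !big_ord1 !mxE /=.
  have [-> | i0] := eqVneq i 0; have [-> | j0] := eqVneq j 0;
    rewrite ?eqxx ?(negPf i0) ?(negPf j0) ?skew_mx_diag /=;
    rewrite ?mulr1 ?mul1r ?mulr0 ?mul0r ?addr0 ?add0r //.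
  by rewrite borderM.
by have := mulmx_max_rank (row_mx (col 0 M) e^T) (col_mx e (row 0 M)).
Qed.

End BorderedSkewMatrices.

Lemma row_sqnorm_gt0 (R : realDomainType) n (u : 'rV[R]_n) :
  u != 0 -> 0 < \sum_j u 0 j ^+ 2.
Proof.
move=> u0; rewrite lt_def sumr_ge0 ?andbT => [|j _]; last exact: sqr_ge0.
apply: contra u0 => /eqP sum0; apply/eqP/rowP => j; rewrite mxE.
have /eqP := psumr_eq0P (fun i _ => sqr_ge0 (u 0 i)) sum0 (i := j) isT.
by rewrite sqrf_eq0 => /eqP.
Qed.

Lemma lambda1_eq_qform_lb (R : realType) n (A : 'M[R]_n) c :
    eigenvalue A c ->
    (forall u : 'rV_n, c * \sum_j u 0 j ^+ 2 <= (u *m A *m u^T) 0 0) ->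
  lambda1 A = c.
Proof.
move=> Ac qform_lb.
have c_lb y : eigenvalue A y -> c <= y.
  move=> /eigenvalueP [w wA w0].
  have := qform_lb w; rewrite wA -scalemxAl mxE mulmx_trmx_row.
  by rewrite ler_pM2r // row_sqnorm_gt0.
apply/le_anti/andP; split; first by apply: ge_inf => //; exists c.
by apply: lb_le_inf; [exists c | exact: c_lb].
Qed.

Lemma lambda1_sum_border_skew_sqr (R : realType) k (I : eqType) (r : seq I)
    (M : I -> 'M[R]_k.+1) :
    (forall l, l \in r -> (M l)^T = - M l /\ is_border_mx (M l)) ->
  lambda1 (\sum_(l <- r) M l ^+ 2) = - \sum_(l <- r) row0_sqnorm (M l).
Proof.
move=> skew_border; apply: lambda1_eq_qform_lb => [|u].
  apply/eigenvalueP; exists (delta_mx 0 0); last first.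
    by apply/eqP => /rowP /(_ 0); rewrite !mxE eqxx; exact/eqP/oner_neq0.
  rewrite mulmx_sumr -sumrN scaler_suml; apply: eq_big_seq => l lr.
  by have [skewl borderl] := skew_border l lr; exact: border_skew_row0_sqr.
rewrite mulmx_sumr mulmx_suml summxE mulNr mulr_suml -sumrN !(big_seq _ _ r).
apply: ler_sum => l lr.
by have [skewl borderl] := skew_border l lr; exact: border_skew_sqr_qform_ge.
Qed.

Lemma lambda1_border_skew_sqr (R : realType) k (M : 'M[R]_k.+1) :
  M^T = - M -> is_border_mx M -> lambda1 (M ^+ 2) = - row0_sqnorm M.
Proof.
move=> skewM borderM.
have := @lambda1_sum_border_skew_sqr R k _ [:: tt] (fun=> M); rewrite !big_seq1.
by apply.
Qed.

Lemma sum_diag_blocks (V : nmodType) m n (c : V) (t w : nat -> V) :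
    (0 < n <= m)%N ->
  \sum_(i < m) (if i == 0%N :> nat then c else if (i < n)%N then t i.+1 else w (i - n).+1)
  = c + \sum_(2 <= l < n.+1) t l + \sum_(1 <= i < (m - n).+1) w i.
Proof.
move=> /andP [n_gt0 n_le_m].
pose F i := if i == 0%N then c else if (i < n)%N then t i.+1 else w (i - n).+1.
rewrite -(big_mkord xpredT F) {}/F.
rewrite big_ltn ?(leq_trans n_gt0) //= (big_cat_nat n_gt0 n_le_m) /= addrA.
congr (_ + _ + _).
  rewrite [RHS]big_add1 /=; apply: eq_big_nat => i /andP [i_gt0 i_lt_n].
  by rewrite gtn_eqF // i_lt_n.
rewrite [RHS]big_add1 /= -{1}[n]add0n big_addn.
apply: eq_big_nat => i /andP [_ i_lt].
by rewrite addnK gtn_eqF ?ltn_addl // ltnNge leq_addl.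
Qed.

Lemma psumr_seq_eq0P (R : numDomainType) (I : eqType) (r : seq I) (F : I -> R) :
    (forall i, i \in r -> 0 <= F i) -> \sum_(i <- r) F i = 0 ->
  forall i, i \in r -> F i = 0.
Proof.
move=> F_ge0 /eqP; rewrite big_seq psumr_eq0 // => /allP F0 i ir.
exact/eqP/(implyP (F0 i ir) ir).
Qed.

Section Lemma4p1.
Variables (R : realType) (k n : nat) (M : nat -> 'M[R]_k.+1) (v : nat -> R).
Hypotheses (n_ge2 : (2 <= n)%N) (n_le_m : (n <= k.+1)%N).
Hypothesis skewM : forall l, (1 <= l <= n)%N -> (M l)^T = - M l.
Hypothesis v_le0 : forall i, (1 <= i <= k.+1 - n)%N -> v i <= 0.
Hypothesis hdiag : M 1%N ^+ 2 - \sum_(2 <= l < n.+1) M l ^+ 2 =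
  diag_mx (\row_(i < k.+1)
    (if i == 0%N :> nat then - (2^-1 * \tr (M 1%N ^+ 2))
     else if (i < n)%N then 2^-1 * \tr (M i.+1 ^+ 2)
     else v (i - n).+1)).

Let r1 := row0_sqnorm (M 1).
Let w1 := minor0_sqnorm (M 1).
Let A := \sum_(2 <= l < n.+1) row0_sqnorm (M l).
Let B := \sum_(2 <= l < n.+1) minor0_sqnorm (M l).
Let V := \sum_(1 <= i < (k.+1 - n).+1) v i.

Let skewM1 : (M 1)^T = - M 1.
Proof. by apply: skewM; lia. Qed.

Let skewMl l : (2 <= l < n.+1)%N -> (M l)^T = - M l.
Proof. by move=> lP; apply: skewM; lia. Qed.

Lemma lemma4p1_entry00 : - r1 + A = 2^-1 * (2 * r1 + w1).
Proof.
have sumA : \sum_(2 <= l < n.+1) (M l ^+ 2) 0 0 = - A.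
  by rewrite -sumrN; apply: eq_big_nat => l /skewMl skewl; rewrite skew_sqr_diag.
have := congr1 (fun X : 'M_k.+1 => X 0 0) hdiag; rewrite (skew_sqr_tr skewM1).
(* Generalizing M 1 ^+ 2 keeps !mxE from unfolding it into a product. *)
move: (M 1 ^+ 2) (skew_sqr_diag skewM1 0) => S1 S1_00.
by rewrite /= !mxE summxE eqxx mulr1n /= S1_00 sumA opprK mulrN opprK.
Qed.

Lemma lemma4p1_trace :
  - (2 * r1 + w1) + (2 * A + B) = 2^-1 * (2 * r1 + w1) - 2^-1 * (2 * A + B) + V.
Proof.
have sum_tr : \sum_(2 <= l < n.+1) \tr (M l ^+ 2) = - (2 * A + B).
  rewrite /A /B mulr_sumr -big_split -sumrN /=.
  by apply: eq_big_nat => l /skewMl skewl; rewrite skew_sqr_tr.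
have := congr1 mxtrace hdiag; rewrite linearB linear_sum /= mxtrace_diag.
rewrite (eq_bigr _ (fun j _ => mxE _ _ _ _)) /=.
rewrite (sum_diag_blocks _ (fun l => 2^-1 * \tr (M l ^+ 2))); last by lia.
rewrite -mulr_sumr sum_tr (skew_sqr_tr skewM1) /r1 /w1 /V; lra.
Qed.

Lemma lemma4p1_weights0 : B = 0 /\ V = 0.
Proof.
have r1_ge0 : 0 <= r1 := row0_sqnorm_ge0 _.
have w1_ge0 : 0 <= w1 := minor0_sqnorm_ge0 _.
have B_ge0 : 0 <= B.
  by rewrite /B big_nat; apply: sumr_ge0 => l _; exact: minor0_sqnorm_ge0.
have V_le0 : V <= 0.
  by rewrite /V big_nat; apply: sumr_le0 => i iP; apply: v_le0; lia.
(* Eliminating A between the two identities leaves 2 r1 + B = (2/3) V. *)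
have := lemma4p1_entry00; have := lemma4p1_trace; lra.
Qed.

Lemma lemma4p1_v_eq0 i : (1 <= i <= k.+1 - n)%N -> v i = 0.
Proof.
have [_ V0] := lemma4p1_weights0.
move=> iP; apply/oppr_inj; rewrite oppr0.
apply: (@psumr_seq_eq0P _ _ (index_iota 1 (k.+1 - n).+1) (fun i => - v i)).
- by move=> j; rewrite mem_index_iota oppr_ge0 => jP; apply: v_le0.
- by rewrite sumrN -/V V0 oppr0.
- by rewrite mem_index_iota.
Qed.

Lemma lemma4p1_border l : (2 <= l <= n)%N -> is_border_mx (M l).
Proof.
have [B0 _] := lemma4p1_weights0.
move=> lP; apply: minor0_sqnorm_eq0.
apply: (@psumr_seq_eq0P _ _ (index_iota 2 n.+1) (fun l => minor0_sqnorm (M l))).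
- by move=> j _; exact: minor0_sqnorm_ge0.
- exact: B0.
- by rewrite mem_index_iota.
Qed.

End Lemma4p1.

Theorem lemma4p1 (R : realType) (m n : nat) (M : nat -> 'M[R]_m) (v : nat -> R)
  (hn : (2 <= n)%N) (hnm : (n <= m)%N)
  (hskew : forall l, (1 <= l <= n)%N -> skew_symmetric (M l))
  (hv : forall k, (1 <= k <= m - n)%N -> v k <= 0)
  (hdiag : M 1%N ^+ 2 - \sum_(2 <= l < n.+1) M l ^+ 2 =
     diag_mx (\row_(i < m)
       (if i == 0%N :> nat then - (2^-1 * \tr (M 1%N ^+ 2))
        else if (i < n)%N then 2^-1 * \tr (M i.+1 ^+ 2)
        else v (i - n).+1)) ) :
  (forall k, (1 <= k <= m - n)%N -> v k = 0) /\
  lambda1 (\sum_(2 <= l < n.+1) M l ^+ 2) = \sum_(2 <= l < n.+1) lambda1 (M l ^+ 2) /\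
  (forall i, (2 <= i <= n)%N -> (\rank (M i) <= 2)%N).
Proof.
case: m => [|k] in M hnm hskew hv hdiag *; first by have := leq_trans hn hnm.
have border := lemma4p1_border hn hnm hskew hv hdiag.
have skew_border l : (2 <= l <= n)%N -> (M l)^T = - M l /\ is_border_mx (M l).
  by move=> lP; split; [apply: hskew; lia | exact: border].
split; first exact: lemma4p1_v_eq0 hn hnm hskew hv hdiag.
split.
  rewrite lambda1_sum_border_skew_sqr => [|l]; last first.
    by rewrite mem_index_iota; exact: skew_border.
  rewrite -sumrN; apply: eq_big_nat => l /skew_border [skewl borderl].
  by rewrite lambda1_border_skew_sqr.
by move=> i /skew_border [skewi borderi]; exact: border_skew_rank.
Qed.
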